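(* Let $n=2m-1$ with $m\ge1$ and let $Q$ be the $(n+1)\times(n+1)$ matrix with entries $Q_{ij}=0$ if $i+j<n+2$ and $Q_{ij}=(q-1+\delta_{i+j,n+2})q^{\frac12(n^2-n)+j-2}$ if $i+j\ge n+2$ (the quotient matrix of the opposition graph on maximal flags of $\mathrm{PG}(n,q)$ with respect to the types relative to a fixed point). For $j\in[m]$ let $$v_j=(\underbrace{0,\dots,0}_{m-j},\underbrace{q^j,\dots,q^j}_{j},\underbrace{-1,\dots,-1}_{j},\underbrace{0,\dots,0}_{m-j})^\top.$$ Then $v_j$ is an eigenvector of $Q$ with eigenvalue $-q^{(n^2-1)/2}$.
   Context: $\delta$ is the Kronecker delta; $[m]=\{1,\dots,m\}$. *)

From HB Require Import structures.
From mathcomp Require Import all_boot all_order all_algebra.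
Set Implicit Arguments. Unset Strict Implicit. Unset Printing Implicit Defensive.
Import Order.TTheory GRing.Theory Num.Theory.
Local Open Scope ring_scope.

(* Indices are 0-based: row/column i : 'I_(n.+1) corresponds to the paper's
   index i+1 in {1,...,n+1}. *)

Definition delta (a b : nat) : rat := if a == b then 1 else 0.

Definition Qmat (n q : nat) : 'M[rat]_(n.+1) :=
  \matrix_(i < n.+1, j < n.+1)
    let i1 := (i : nat).+1 in let j1 := (j : nat).+1 in
    if (i1 + j1 < n + 2)%N then 0
    else ((q%:R - 1 + delta (i1 + j1) (n + 2)) *
          (q%:R : rat) ^ ((((n ^ 2 - n) %/ 2)%N)%:Z + (j1%:Z) - 2%:Z)).

Definition vvec (n m q j : nat) : 'cV[rat]_(n.+1) :=
  \col_(k < n.+1)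
    if ((k : nat) < m - j)%N then 0
    else if ((k : nat) < m)%N then (q%:R : rat) ^+ j
    else if ((k : nat) < m + j)%N then -1
    else 0.

Definition prime_power (q : nat) : Prop := exists p k, prime p /\ (0 < k)%N /\ q = (p ^ k)%N.

From HB Require Import structures.
From mathcomp Require Import all_boot all_order all_algebra zify ring.
Set Implicit Arguments. Unset Strict Implicit. Unset Printing Implicit Defensive.
Import Order.TTheory GRing.Theory Num.Theory.
Local Open Scope ring_scope.

(* Let P_b be the column vector whose first b entries are 1 and the others 0.
   Row i of Q only sees the columns k >= n - i, with weight (q - 1) q^k times
   q^e, e = (n^2 - n)/2 - 1, except the weight q^(k+1) q^e on the antidiagonal
   k = n - i.  These weights telescope, so Q P_b = q^(e+b) (1 - P_(n+1-b)):
   Q sends prefix indicators to multiples of suffix indicators.  Since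
   v_j = q^j (P_m - P_(m-j)) - (P_(m+j) - P_m), linearity gives
   Q v_j = - q^(e+m) v_j, and e + m = (n^2 - 1)/2 when n = 2m - 1. *)

Lemma sum_prefix_weights (R : comPzRingType) (x : R) (s b : nat) :
  \sum_(k < b) (s <= k)%:R * ((x - 1 + (k == s :> nat)%:R) * x ^+ k) =
  (s < b)%:R * x ^+ b.
Proof.
elim: b => [|b IHb]; first by rewrite big_ord0 mul0r.
rewrite big_ord_recr /= IHb exprS.
case: (ltngtP s b) => [lt_sb|lt_bs|<-]; rewrite ?ltnS.
- by rewrite ltnW //=; ring.
- by rewrite leqNgt lt_bs /= !mul0r addr0.
- by rewrite leqnn /=; ring.
Qed.

Definition prefix_cV (R : pzSemiRingType) (N b : nat) : 'cV[R]_N :=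
  \col_(k < N) (k < b)%:R.

Section QuotientMatrix.

Variables (n q : nat).
Hypothesis q_gt0 : (0 < q)%N.
Local Notation x := (q%:R : rat).
Let c := x ^ (((n ^ 2 - n) %/ 2)%:Z - 1).

Lemma Qmat_entry (i k : 'I_n.+1) :
  Qmat n q i k =
  c * ((n - i <= k)%:R * ((x - 1 + (k == (n - i)%N :> nat)%:R) * x ^+ k)).
Proof.
have x_neq0 : x != 0 by rewrite pnatr_eq0 -lt0n.
have lt_in := ltn_ord i; rewrite mxE /delta.
case: ifP => [lt_ik | /negbT le_ik].
  by rewrite (_ : (n - i <= k)%N = false) ?mul0r ?mulr0 //; lia.
rewrite (_ : (n - i <= k)%N) ?mul1r; last by lia.
rewrite (_ : (i.+1 + k.+1 == n + 2)%N = (k == (n - i)%N :> nat)); last by lia.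
rewrite (_ : _ + _ - _ = ((n ^ 2 - n) %/ 2)%:Z - 1 + k); last by lia.
by rewrite expfzDr // -exprnP /c; case: (k == (n - i)%N :> nat) => /=; ring.
Qed.

Lemma Qmat_mul_prefix (b : nat) : (b <= n.+1)%N ->
  Qmat n q *m prefix_cV rat n.+1 b =
  (c * x ^+ b) *: (const_mx 1 - prefix_cV rat n.+1 (n.+1 - b)).
Proof.
move=> le_bn; apply/matrixP => i j; rewrite !mxE.
under eq_bigr do rewrite Qmat_entry mxE.
pose w k := (n - i <= k)%:R * ((x - 1 + (k == (n - i)%N :> nat)%:R) * x ^+ k).
transitivity (c * \sum_(k < b) w k).
  rewrite (big_ord_widen _ w le_bn) mulr_sumr [RHS]big_mkcond.
  by apply: eq_bigr => k _; case: (k < b)%N; rewrite ?mulr1 ?mulr0.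
rewrite /w sum_prefix_weights mulrCA [RHS]mulrC; congr (_ * _).
have lt_in := ltn_ord i.
rewrite (_ : (n - i < b)%N = ~~ (i < n.+1 - b)%N); last by lia.
by case: (i < _)%N => /=; rewrite ?subrr ?subr0.
Qed.

End QuotientMatrix.

Lemma vvec_prefix (n m q t : nat) : (t <= m)%N ->
  vvec n m q t =
  (q%:R : rat) ^+ t *: (prefix_cV rat n.+1 m - prefix_cV rat n.+1 (m - t))
  - (prefix_cV rat n.+1 (m + t) - prefix_cV rat n.+1 m).
Proof.
move=> le_tm; apply/matrixP => k j; rewrite !mxE.
case: (ltnP k (m - t)) => ?; case: (ltnP k m) => ?; case: (ltnP k (m + t)) => ? /=;
  first [exfalso; lia | ring].
Qed.

Lemma vvec_neq0 (n m q t : nat) : (0 < q)%N -> (m <= n.+1)%N -> (1 <= t <= m)%N ->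
  vvec n m q t != 0.
Proof.
move=> q_gt0 le_mn /andP[t_gt0 le_tm]; apply/eqP => /matrixP/(_ (inord m.-1) 0).
rewrite !mxE inordK; last by lia.
rewrite ifF; last by lia.
by rewrite ifT; [apply/eqP; rewrite expf_neq0 // pnatr_eq0 -lt0n | lia].
Qed.

Lemma expfz_half_exponent (F : fieldType) (x : F) (m n : nat) :
  x != 0 -> n.+1 = (2 * m)%N ->
  x ^ (((n ^ 2 - n) %/ 2)%:Z - 1) * x ^+ m = x ^+ ((n ^ 2 - 1) %/ 2).
Proof.
move=> x_neq0 nE; rewrite !exprnP -expfzDr //; congr (_ ^ _).
have -> : (n ^ 2 - n = (n * (m - 1)) * 2)%N by nia.
have -> : (n ^ 2 - 1 = (n.+1 * (m - 1)) * 2)%N by nia.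
rewrite !mulnK //; lia.
Qed.

Lemma Qmat_mul_vvec (n m q t : nat) :
  (0 < q)%N -> n.+1 = (2 * m)%N -> (t <= m)%N ->
  Qmat n q *m vvec n m q t = - (q%:R : rat) ^+ ((n ^ 2 - 1) %/ 2) *: vvec n m q t.
Proof.
move=> q_gt0 nE le_tm; rewrite vvec_prefix // !mulmxBr -scalemxAr !mulmxBr.
rewrite !Qmat_mul_prefix //; try lia.
rewrite (_ : n.+1 - m = m)%N; last by lia.
rewrite (_ : n.+1 - (m - t) = m + t)%N; last by lia.
rewrite (_ : n.+1 - (m + t) = m - t)%N; last by lia.
have x_neq0 : (q%:R : rat) != 0 by rewrite pnatr_eq0 -lt0n.
rewrite -(expfz_half_exponent x_neq0 nE).
have xmt : (q%:R : rat) ^+ (m + t) = q%:R ^+ (m - t) * q%:R ^+ t * q%:R ^+ t.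
  by rewrite -!exprD subnK.
have xm : (q%:R : rat) ^+ m = q%:R ^+ (m - t) * q%:R ^+ t by rewrite -exprD subnK.
apply/matrixP => i j; rewrite !mxE xmt xm; ring.
Qed.

Theorem mainTheorem4 (m n q : nat) (hm : (1 <= m)%N) (hn : n = (2 * m - 1)%N)
  (hq : prime_power q) (j : nat) (hj : (1 <= j <= m)%N) :
  vvec n m q j != 0 /\
  Qmat n q *m vvec n m q j = (- (q%:R : rat) ^+ ((n ^ 2 - 1) %/ 2)) *: vvec n m q j.
Proof.
have q_gt0 : (0 < q)%N.
  by case: hq => p [k [/prime_gt0 p_gt0 [_ ->]]]; rewrite expn_gt0 p_gt0.
split; first by apply: vvec_neq0; lia.
by apply: Qmat_mul_vvec; lia.
Qed.
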